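(* Let $n\geq 1$ and $m\geq 1$ be integers. Then \[\frac{1}{n!}\sum_{\pi\in S_n}|{\bf B}^{-1}({\bf B}(\pi))|^m=\prod_{j=1}^{n-1}\frac{2^{m+1}+n-j-1}{n-j+1}.\]
   Context: $S_n$ is the set of permutations of $\{1,\dots,n\}$ written as words $\pi_1\cdots\pi_n$. For $i\in\{1,\dots,n-1\}$, $t_i(\pi)$ swaps $\pi_i$ and $\pi_{i+1}$ if $\pi_i>\pi_{i+1}$ and leaves $\pi$ unchanged otherwise. The bubble sort map is ${\bf B}=t_{n-1}\circ\cdots\circ t_1:S_n\to S_n$, and ${\bf B}^{-1}(\sigma)=\{\tau\in S_n:{\bf B}(\tau)=\sigma\}$. *)

From mathcomp Require Import all_boot all_order all_algebra all_fingroup.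
From mathcomp Require Import perm.
Set Implicit Arguments. Unset Strict Implicit. Unset Printing Implicit Defensive.

(* A permutation pi of 'I_n is read as the word pi 0, pi 1, ..., pi (n-1)
   (0-indexed positions and values; the order is the same as for 1..n). *)

Definition bs_step (n : nat) (i : nat) (p : 'S_n) : 'S_n :=
  match ltnP i.+1 n with
  | LtnNotGeq h =>
    let a : 'I_n := Ordinal (ltnW h) in
    let b : 'I_n := Ordinal h in
    if p b < p a then (tperm a b * p)%g else p
  | GeqNotLtn _ => p
  end.
(* Note: (tperm a b * p)%g is the map x |-> p (tperm a b x), i.e. the word with
   positions a and b swapped. *)

(* Bubble sort map B = t_{n-1} o ... o t_1 (1-indexed), i.e. apply t at
   0-indexed positions 0, 1, ..., n-2 in this order. *)
Definition bubble (n : nat) (p : 'S_n) : 'S_n :=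
  foldl (fun q i => bs_step i q) p (iota 0 n.-1).

Definition bubble_preimage (n : nat) (s : 'S_n) : {set 'S_n} :=
  [set t : 'S_n | bubble t == s].

From mathcomp Require Import all_boot all_order all_algebra all_fingroup.
From mathcomp Require Import zify.
Set Implicit Arguments. Unset Strict Implicit. Unset Printing Implicit Defensive.
Import Order.TTheory.

(* On words, B is one left-to-right pass of adjacent transpositions.  If x is
   smaller than every letter of t, the pass sends t with x inserted at position
   i to B(t) with x inserted at position i-1 (at 0 if i = 0).  Hence the fibre
   of B over sigma with x inserted at position j has |B^-1(sigma)| times 2, 1
   or 0 elements according as j = 0, 0 < j < |t| or j = |t|, so adjoining a new
   minimum multiplies sum_sigma |B^-1(sigma)|^k by 2^k + |t| - 1.  This gives
   sum_sigma |B^-1(sigma)|^k = prod_(i < n-1) (2^k + i), and the theorem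
   follows from sum_pi |B^-1(B pi)|^m = sum_sigma |B^-1(sigma)|^(m+1) and
   n! = prod_(i < n-1) (i + 2). *)

Section BubblePass.

Variables (disp : Order.disp_t) (T : orderType disp).
Implicit Types (x y z : T) (s t u v σ : seq T).

Fixpoint bubble_pass_from y t : seq T :=
  if t is z :: t' then
    if (z < y)%O then z :: bubble_pass_from y t' else y :: bubble_pass_from z t'
  else [:: y].

Definition bubble_pass s : seq T := if s is y :: t then bubble_pass_from y t else [::].

Definition insert_at x (i : nat) s : seq T := take i s ++ x :: drop i s.

Lemma perm_bubble_pass s : perm_eq (bubble_pass s) s.
Proof.
case: s => //= y t; elim: t y => [|z t IHt] y //=.
case: ifP => _; last by rewrite perm_cons.
apply: (perm_trans (y := z :: y :: t)); first by rewrite perm_cons.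
by rewrite -[z :: y :: t]/([:: z] ++ [:: y] ++ t) perm_catCA.
Qed.

Lemma perm_insert_at x i s : perm_eq (insert_at x i s) (x :: s).
Proof. by rewrite /insert_at -cat1s perm_catCA cat_take_drop. Qed.

Lemma eq_insert_at x i j u v : x \notin u -> x \notin v ->
  i <= size u -> j <= size v ->
  (insert_at x i u == insert_at x j v) = (i == j) && (u == v).
Proof.
have index_ins w k : x \notin w -> k <= size w -> index x (insert_at x k w) = k.
  move=> xw kw; rewrite index_cat ifN; last by apply: contra xw; apply: mem_take.
  by rewrite /= eqxx addn0 size_take; case: ltngtP kw => // ->.
have filter_ins w k : x \notin w -> filter (predC1 x) (insert_at x k w) = w.
  move=> xw; rewrite filter_cat /= eqxx -filter_cat cat_take_drop.
  by apply/all_filterP/allP => z zw /=; apply: contraNneq xw => <-.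
move=> xu xv iu jv; apply/eqP/andP => [e | [/eqP-> /eqP->]] //.
split; apply/eqP.
  by rewrite -(index_ins u i) // e index_ins.
by rewrite -(filter_ins u i) // e filter_ins.
Qed.

Lemma bubble_pass_insert_min x i s : all (fun z => (x < z)%O) s ->
  i <= size s -> bubble_pass (insert_at x i s) = insert_at x i.-1 (bubble_pass s).
Proof.
have pass_from y t k : (x < y)%O -> all (fun z => (x < z)%O) t -> k <= size t ->
    bubble_pass_from y (insert_at x k t) = insert_at x k (bubble_pass_from y t).
  elim: t y k => [|z t IHt] y [|k] xy; rewrite /insert_at /= ?xy ?take0 ?drop0 //.
  by rewrite ltnS => /andP[xz xt] kt; case: ifP => _; rewrite IHt.
case: s => [|y t] /=; first by case: i.
move=> /andP[xy xt]; case: i => [|i] /= it; last exact: pass_from.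
by rewrite /insert_at /= (lt_gtF xy) take0 drop0.
Qed.

Lemma perm_permutations_insert x s : x \notin s ->
  perm_eq (permutations (x :: s))
          [seq insert_at x j t | t <- permutations s, j <- iota 0 (size s).+1].
Proof.
move=> xs; apply: uniq_perm; first exact: permutations_uniq.
  apply: allpairs_uniq; rewrite ?permutations_uniq ?iota_uniq //.
  move=> [t1 j1] [t2 j2] /allpairsP[[t j] [+ + [-> ->]]]
         /allpairsP[[t' j'] [+ + [-> ->]]] /=.
  rewrite !mem_permutations !mem_iota /= !add0n !ltnS => pt jt pt' jt' /eqP.
  rewrite eq_insert_at ?(perm_mem pt) ?(perm_mem pt') ?(perm_size pt) ?(perm_size pt') //.
  by case/andP=> /eqP-> /eqP->.
move=> w; rewrite mem_permutations; apply/idP/allpairsP => [pw | [[t j] []]]; last first.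
  rewrite mem_permutations /= => pt _ ->.
  by rewrite (permPl (perm_insert_at _ _ _)) perm_cons.
have xw : x \in w by rewrite (perm_mem pw) mem_head.
case/splitPr: xw pw => w1 w2 pw.
have pw12 : perm_eq (w1 ++ w2) s.
  by rewrite -(perm_cons x) -(permPr pw) perm_sym (perm_catCA w1 [:: x] w2).
exists (w1 ++ w2, size w1); split; first by rewrite mem_permutations.
  by rewrite mem_iota add0n ltnS -(perm_size pw12) size_cat /= leq_addr.
by rewrite /= /insert_at take_size_cat // drop_size_cat.
Qed.

Lemma sum_iota_predn_eq L j :
  \sum_(i <- iota 0 L.+1) (i.-1 == j) = (j < L) + (j == 0).
Proof.
elim: L => [|L IHL]; first by rewrite big_seq1; case: j.
by rewrite -addn1 iotaD big_cat big_seq1 IHL /=; lia.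
Qed.

Lemma sum_iota_predn_card_pow k L : 0 < k -> 0 < L ->
  \sum_(j <- iota 0 L.+1) ((j < L) + (j == 0)) ^ k = 2 ^ k + L.-1.
Proof.
case: L => // L k_gt0 _; rewrite -addn1 iotaD big_cat big_seq1 /= ltnn exp0n // addn0.
rewrite big_cons /=; congr (_ + _).
rewrite (eq_big_seq (fun=> 1)) ?sum1_size ?size_iota //.
move=> j; rewrite mem_iota add1n ltnS => /andP[j_gt0 j_le].
by rewrite j_le eqn0Ngt j_gt0 exp1n.
Qed.

Definition bubble_fiber_size s σ : nat :=
  \sum_(π <- permutations s) (bubble_pass π == σ).

Definition bubble_moment (k : nat) s : nat :=
  \sum_(σ <- permutations s) bubble_fiber_size s σ ^ k.

Lemma sum_bubble_fiber_size_pow m s :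
  \sum_(π <- permutations s) bubble_fiber_size s (bubble_pass π) ^ m
  = bubble_moment m.+1 s.
Proof.
transitivity (\sum_(π <- permutations s) \sum_(σ <- permutations s)
                (bubble_pass π == σ) * bubble_fiber_size s σ ^ m).
  apply: eq_big_seq => π; rewrite !mem_permutations => pπ.
  have bπ : bubble_pass π \in permutations s.
    by rewrite mem_permutations (permPl (perm_bubble_pass π)).
  rewrite (bigD1_seq _ bπ (permutations_uniq s)) /= eqxx mul1n big1 ?addn0 //.
  by move=> σ; rewrite eq_sym => /negbTE->.
rewrite exchange_big; apply: eq_bigr => σ _.
by rewrite -big_distrl expnS.
Qed.

Lemma all_gt_notin x s : all (fun z => (x < z)%O) s -> x \notin s.
Proof. by move=> xs; apply/negP => /(allP xs); rewrite ltxx. Qed.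

(* [(j < size s) + (j == 0)] counts the insertion points i with i.-1 = j. *)
Lemma bubble_fiber_size_insert_min x s σ j :
  all (fun z => (x < z)%O) s -> σ \in permutations s -> j <= size s ->
  bubble_fiber_size (x :: s) (insert_at x j σ)
  = bubble_fiber_size s σ * ((j < size s) + (j == 0)).
Proof.
rewrite mem_permutations => xs σs js.
have x's := all_gt_notin xs.
rewrite /bubble_fiber_size (perm_big _ (perm_permutations_insert x's)) big_allpairs_dep.
rewrite -sum_iota_predn_eq big_distrl; apply: eq_big_seq => t.
rewrite mem_permutations => ts; rewrite big_distrr; apply: eq_big_seq => i.
rewrite mem_iota add0n ltnS => /andP[_ i_le].
have bts := perm_bubble_pass t.
rewrite bubble_pass_insert_min ?(perm_all _ ts) ?(perm_size ts) // eq_insert_at.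
- by case: eqP; case: eqP.
- by rewrite (perm_mem bts x) (perm_mem ts x).
- by rewrite (perm_mem σs x).
- by rewrite (perm_size bts) (perm_size ts) (leq_trans (leq_pred i)).
- by rewrite (perm_size σs).
Qed.

Lemma bubble_moment_cons_min k x s : 0 < k ->
  all (fun z => (x < z)%O) s -> 0 < size s ->
  bubble_moment k (x :: s) = bubble_moment k s * (2 ^ k + (size s).-1).
Proof.
move=> k_gt0 xs s_gt0.
rewrite /bubble_moment (perm_big _ (perm_permutations_insert (all_gt_notin xs))).
rewrite big_allpairs_dep big_distrl; apply: eq_big_seq => σ σs.
rewrite -sum_iota_predn_card_pow // big_distrr; apply: eq_big_seq => j.
rewrite mem_iota add0n ltnS => /andP[_ j_le].
by rewrite bubble_fiber_size_insert_min // expnMn.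
Qed.

End BubblePass.

Lemma bubble_moment_iota k a n : 0 < k ->
  bubble_moment k (iota a n.+1) = \prod_(i < n) (2 ^ k + i).
Proof.
move=> k_gt0; elim: n a => [|n IHn] a.
  by rewrite big_ord0 /bubble_moment /bubble_fiber_size /= !big_seq1 eqxx exp1n.
have a_lt : all (fun z => (a < z)%O) (iota a.+1 n.+1).
  by apply/allP => z; rewrite mem_iota ltEnat /=; lia.
rewrite -[iota a n.+2]/(a :: iota a.+1 n.+1) bubble_moment_cons_min ?size_iota //.
by rewrite IHn big_ord_recr.
Qed.

Definition word n (p : 'S_n) : seq nat := [seq val (p i) | i <- enum 'I_n].

Lemma size_word n (p : 'S_n) : size (word p) = n.
Proof. by rewrite size_map size_enum_ord. Qed.

Lemma nth_word n (p : 'S_n) (i : 'I_n) : nth 0 (word p) i = p i.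
Proof. by rewrite (nth_map i) ?size_enum_ord // nth_ord_enum. Qed.

Lemma word_inj n : injective (@word n).
Proof.
move=> p q pq; apply/permP => i; apply: ord_inj.
by rewrite -nth_word pq nth_word.
Qed.

Lemma perm_word_iota n (p : 'S_n) : perm_eq (word p) (iota 0 n).
Proof.
apply: uniq_perm; first by rewrite map_inj_uniq ?enum_uniq // => i j /val_inj/perm_inj.
  exact: iota_uniq.
move=> k; rewrite mem_iota /=; apply/mapP/idP => [[i _ ->] | lt_kn]; first exact: ltn_ord.
by exists (p^-1 (Ordinal lt_kn))%g; rewrite ?mem_enum ?permKV.
Qed.

Lemma perm_map_word n :
  perm_eq [seq word p | p <- enum 'S_n] (permutations (iota 0 n)).
Proof.
have uniq_words : uniq [seq word p | p <- enum 'S_n].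
  by rewrite map_inj_uniq ?enum_uniq //; exact: word_inj.
have sub_words : {subset [seq word p | p <- enum 'S_n] <= permutations (iota 0 n)}.
  by move=> _ /mapP[p _ ->]; rewrite mem_permutations perm_word_iota.
apply: uniq_perm; rewrite ?permutations_uniq //.
apply: (uniq_min_size uniq_words sub_words _).2.
by rewrite size_map -cardE card_Sn size_permutations ?iota_uniq // size_iota.
Qed.

Lemma big_perm_word (R : Type) (idx : R) (op : Monoid.com_law idx) n
    (F : seq nat -> R) :
  \big[op/idx]_(p : 'S_n) F (word p)
  = \big[op/idx]_(w <- permutations (iota 0 n)) F w.
Proof. by rewrite -(perm_big _ (perm_map_word n)) big_map big_enum. Qed.

Definition swap_adjacent (i : nat) (w : seq nat) : seq nat :=
  take i w ++ nth 0 w i.+1 :: nth 0 w i :: drop i.+2 w.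

Definition sort_adjacent (w : seq nat) (i : nat) : seq nat :=
  if nth 0 w i.+1 < nth 0 w i then swap_adjacent i w else w.

Lemma size_swap_adjacent i w : i.+1 < size w -> size (swap_adjacent i w) = size w.
Proof. by move=> lt_iw; rewrite size_cat size_take /= size_drop; case: ifP; lia. Qed.

Lemma nth_swap_adjacent i w k : i.+1 < size w ->
  nth 0 (swap_adjacent i w) k
  = nth 0 w (if k == i then i.+1 else if k == i.+1 then i else k).
Proof.
move=> lt_iw; rewrite nth_cat size_take (ltnW lt_iw).
case: (ltngtP k i) => [lt_ki | lt_ik | ->]; last by rewrite subnn.
  by rewrite nth_take // (ltn_eqF (leqW lt_ki)).
have [-> | ne_ki] := eqVneq k i.+1; first by rewrite subSnn.
rewrite (_ : k - i = (k - i.+2).+2) /=; last by lia.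
by rewrite nth_drop; congr nth; lia.
Qed.

Lemma word_tperm_adjacent n (p : 'S_n) (a b : 'I_n) : b = a.+1 :> nat ->
  word (tperm a b * p)%g = swap_adjacent a (word p).
Proof.
move=> ab; have lt_an : a.+1 < n by rewrite -ab ltn_ord.
apply: (@eq_from_nth _ 0); first by rewrite size_swap_adjacent !size_word.
move=> k; rewrite size_word => lt_kn.
rewrite nth_swap_adjacent ?size_word // -[k]/(nat_of_ord (Ordinal lt_kn)).
rewrite !nth_word permM.
case: tpermP => [-> | -> | ka kb]; first by rewrite eqxx -ab nth_word.
  by rewrite ab (gtn_eqF (ltnSn a)) eqxx nth_word.
have ka' : (k == a) = false by apply/eqP => e; apply: ka; exact: ord_inj.
have kb' : (k == a.+1) = false.
  by rewrite -ab; apply/eqP => e; apply: kb; exact: ord_inj.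
by rewrite ka' kb' nth_word.
Qed.

Lemma word_bs_step n (p : 'S_n) i : i.+1 < n ->
  word (bs_step i p) = sort_adjacent (word p) i.
Proof.
rewrite /bs_step; case: ltnP => // lt_in _.
rewrite /sort_adjacent (nth_word p (Ordinal lt_in)) (nth_word p (Ordinal (ltnW lt_in))).
by case: ifP => // _; apply: word_tperm_adjacent.
Qed.

Lemma foldl_sort_adjacent a y t :
  foldl sort_adjacent (a ++ y :: t) (iota (size a) (size t))
  = a ++ bubble_pass_from y t.
Proof.
elim: t a y => [|z t IHt] a y //=.
have nth_y : nth 0 (a ++ [:: y, z & t]) (size a) = y by rewrite nth_cat ltnn subnn.
have nth_z : nth 0 (a ++ [:: y, z & t]) (size a).+1 = z.
  by rewrite nth_cat ltnNge leqnSn subSnn.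
rewrite [sort_adjacent _ _]/sort_adjacent nth_y nth_z -[(z < y)%O]/(z < y).
case: ifP => _.
  rewrite /swap_adjacent nth_y nth_z take_size_cat // -addn2 drop_cat.
  rewrite ltnNge leq_addr addKn /= drop0.
  by rewrite -cat_rcons -(size_rcons a z) IHt cat_rcons.
by rewrite -cat_rcons -(size_rcons a y) IHt cat_rcons.
Qed.

Lemma word_bubble n (p : 'S_n) : word (bubble p) = bubble_pass (word p).
Proof.
have fold_steps (l : seq nat) (q : 'S_n) : all (fun i => i.+1 < n) l ->
    word (foldl (fun q i => bs_step i q) q l) = foldl sort_adjacent (word q) l.
  by elim: l q => //= i l IHl q /andP[lt_in all_l]; rewrite IHl // word_bs_step.
rewrite /bubble fold_steps; last by apply/allP => i; rewrite mem_iota; lia.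
have := size_word p; case: (word p) => [|y t] /= <- //.
exact: (foldl_sort_adjacent [::]).
Qed.

Lemma card_bubble_preimage n (p : 'S_n) :
  #|bubble_preimage (bubble p)| = bubble_fiber_size (iota 0 n) (bubble_pass (word p)).
Proof.
pose F w : nat := bubble_pass w == bubble_pass (word p).
rewrite /bubble_fiber_size -(@big_perm_word _ _ _ n F).
rewrite -sum1_card big_mkcond /=; apply: eq_bigr => q _.
by rewrite /F inE -(inj_eq (@word_inj n)) !word_bubble; case: eqP.
Qed.

Lemma fact_succ_prod n : n.+1`! = \prod_(i < n) i.+2.
Proof. by rewrite fact_prod big_add1 big_nat_recl //= mul1n big_mkord. Qed.

Import GRing.Theory.
Local Open Scope ring_scope.

Theorem mainTheorem8 (n m : nat) (hn : (1 <= n)%N) (hm : (1 <= m)%N) :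
  (n`!%:R)^-1 * \sum_(p : 'S_n) (#|bubble_preimage (bubble p)|%:R) ^+ m
  = \prod_(1 <= j < n)
      (((2 ^ m.+1 + n - j - 1)%N)%:R / ((n - j + 1)%N)%:R) :> rat.
Proof.
case: n hn => // n _.
have -> : \sum_(p : 'S_n.+1) #|bubble_preimage (bubble p)|%:R ^+ m
          = (bubble_moment m.+1 (iota 0 n.+1))%:R :> rat.
  rewrite -sum_bubble_fiber_size_pow -(@big_perm_word _ _ _ n.+1
    (fun w => bubble_fiber_size (iota 0 n.+1) (bubble_pass w) ^ m)%N) natr_sum.
  by apply: eq_bigr => p _; rewrite card_bubble_preimage natrX.
rewrite bubble_moment_iota // fact_succ_prod !natr_prod mulrC -prodf_div.
rewrite big_add1 big_nat_rev big_mkord; apply: eq_bigr => i _ /=.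
have lt_in := ltn_ord i; congr (_%:R / _%:R); lia.
Qed.
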